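(* Let $l:R\to S$ be a Frobenius extension of two-sided Noetherian rings such that ${}_RS_R$ is centrally projective over $R$, let $\omega$ be a finitely generated left $R$-module, and let $M$ be a left $S$-module with $M\in\mathrm{add}_S(S\otimes_R\omega)$. Then the underlying $R$-module ${}_RM$ lies in $\mathrm{add}_R\omega$.
   Context: A ring extension $S/R$ is a unital ring homomorphism $l:R\to S$; $S$-modules are $R$-modules by restriction. $S/R$ is a Frobenius extension if ${}_RS$ is finitely generated projective and ${}_SS_R\cong\mathrm{Hom}_R({}_RS_S,{}_RR_R)$ as $S$-$R$-bimodules. ${}_RS_R$ is centrally projective over $R$ if it is isomorphic as an $R$-$R$-bimodule to a direct summand of a finite direct sum of copies of ${}_RR_R$. For a module $W$ over a ring $A$, $\mathrm{add}_AW$ is the class of $A$-modules isomorphic to direct summands of finite direct sums of copies of $W$. $S\otimes_R\omega$ is a left $S$-module via $S$. *)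

From HB Require Import structures.
From mathcomp Require Import all_boot all_order all_algebra.
Set Implicit Arguments. Unset Strict Implicit. Unset Printing Implicit Defensive.
Import GRing.Theory.
Local Open Scope ring_scope.

Definition linear_wrt (A : pzRingType) (U V : zmodType)
  (aU : A -> U -> U) (aV : A -> V -> V) (f : U -> V) : Prop :=
  (forall x y, f (x - y) = f x - f y) /\ (forall a x, f (aU a x) = aV a (f x)).

Definition act_pow (A : Type) (W : zmodType) (n : nat) (aW : A -> W -> W)
  : A -> {ffun 'I_n -> W} -> {ffun 'I_n -> W} :=
  fun a v => [ffun j => aW a (v j)].

(* U lies in add_A W: U is isomorphic to a direct summand of W^n for some n,
   i.e. there are A-linear maps i : U -> W^n, p : W^n -> U with p \o i = id. *)
Definition in_add (A : pzRingType) (U W : zmodType)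
  (aU : A -> U -> U) (aW : A -> W -> W) : Prop :=
  exists n : nat, exists (i : U -> {ffun 'I_n -> W}) (p : {ffun 'I_n -> W} -> U),
    [/\ linear_wrt aU (@act_pow A W n aW) i, linear_wrt (@act_pow A W n aW) aU p
      & forall u, p (i u) = u].

Definition is_left_ideal (A : pzRingType) (I : A -> Prop) : Prop :=
  [/\ I 0, (forall x y, I x -> I y -> I (x - y)) & (forall r x, I x -> I (r * x))].
Definition is_right_ideal (A : pzRingType) (I : A -> Prop) : Prop :=
  [/\ I 0, (forall x y, I x -> I y -> I (x - y)) & (forall r x, I x -> I (x * r))].
Definition left_noetherian (A : pzRingType) : Prop :=
  forall I : nat -> A -> Prop, (forall n, is_left_ideal (I n)) ->
    (forall n x, I n x -> I n.+1 x) ->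
    exists N, forall m, (N <= m)%N -> forall x, I m x -> I N x.
Definition right_noetherian (A : pzRingType) : Prop :=
  forall I : nat -> A -> Prop, (forall n, is_right_ideal (I n)) ->
    (forall n x, I n x -> I n.+1 x) ->
    exists N, forall m, (N <= m)%N -> forall x, I m x -> I N x.
Definition noetherian (A : pzRingType) : Prop :=
  left_noetherian A /\ right_noetherian A.

(* Frobenius extension: _R S finitely generated projective (i.e. in add_R R),
   and _S S_R ~ Hom_R(_R S_S, _R R_R) as S-R-bimodules, where
   (s.phi)(x) = phi(x s) and (phi.r)(x) = phi(x) r. *)
Definition left_R_linear (R S : pzRingType) (l : {rmorphism R -> S})
  (phi : S -> R) : Prop :=
  (forall x y, phi (x - y) = phi x - phi y) /\ (forall r x, phi (l r * x) = r * phi x).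

Definition frobenius (R S : pzRingType) (l : {rmorphism R -> S}) : Prop :=
  in_add (fun r (s : S) => l r * s) (fun r (x : R) => r * x) /\
  exists theta : S -> S -> R,
    (forall x, left_R_linear l (theta x)) /\
    [/\ forall x y, theta (x - y) = (fun z => theta x z - theta y z),
        forall s x, theta (s * x) = (fun z => theta x (z * s)),
        forall x r, theta (x * l r) = (fun z => theta x z * r),
        injective theta
      & forall phi, left_R_linear l phi -> exists x, theta x = phi].

Definition bilinear_pow (R S : pzRingType) (l : {rmorphism R -> S}) (n : nat)
  (f : S -> {ffun 'I_n -> R}) : Prop :=
  (forall x y, f (x - y) = f x - f y) /\
  (forall r r' x, f (l r * x * l r') = [ffun j => r * f x j * r']).
Definition bilinear_pow_inv (R S : pzRingType) (l : {rmorphism R -> S}) (n : nat)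
  (g : {ffun 'I_n -> R} -> S) : Prop :=
  (forall x y, g (x - y) = g x - g y) /\
  (forall r r' (v : {ffun 'I_n -> R}), g [ffun j => r * v j * r'] = l r * g v * l r').
Definition centrally_projective (R S : pzRingType) (l : {rmorphism R -> S}) : Prop :=
  exists n (i : S -> {ffun 'I_n -> R}) (p : {ffun 'I_n -> R} -> S),
    [/\ bilinear_pow l i, bilinear_pow_inv l p & forall s, p (i s) = s].

Definition fin_gen (R : pzRingType) (W : lmodType R) : Prop :=
  exists n (g : 'I_n -> W), forall w, exists c : 'I_n -> R,
    w = \sum_(j < n) c j *: g j.

Definition balanced (R S : pzRingType) (l : {rmorphism R -> S}) (W : lmodType R)
  (A : zmodType) (b : S -> W -> A) : Prop :=
  [/\ forall s s' w, b (s - s') w = b s w - b s' w,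
      forall s w w', b s (w - w') = b s w - b s w'
    & forall s r w, b (s * l r) w = b s (r *: w)].

(* (T, tau) is the tensor product S (x)_R W, as a left S-module
   (defined by its universal property). *)
Definition is_tensor (R S : pzRingType) (l : {rmorphism R -> S}) (W : lmodType R)
  (T : lmodType S) (tau : S -> W -> T) : Prop :=
  [/\ balanced l tau,
      forall s s' w, tau (s * s') w = s *: tau s' w
    & forall (A : zmodType) (b : S -> W -> A), balanced l b ->
        exists g : T -> A,
          [/\ forall x y, g (x - y) = g x - g y,
              forall s w, g (tau s w) = b s w
            & forall g' : T -> A, (forall x y, g' (x - y) = g' x - g' y) ->
                (forall s w, g' (tau s w) = b s w) -> forall t, g' t = g t]].

From HB Require Import structures.
From mathcomp Require Import all_boot all_order all_algebra.

(* As an R-R-bimodule S is a direct summand of R^k, via maps i and p. Tensoring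
   with omega, S (x)_R omega is, as a left R-module, a direct summand of
   R^k (x)_R omega = omega^k, via s (x) w |-> (i(s)_j *: w)_j and
   (w_j)_j |-> sum_j p(e_j) (x) w_j. A summand of (S (x)_R omega)^n as
   S-modules is one as R-modules too, and add_R is transitive. *)

Set Implicit Arguments.
Unset Strict Implicit.
Unset Printing Implicit Defensive.
Import GRing.Theory.
Local Open Scope ring_scope.

Lemma morph_sum_of_subB (U V : zmodType) (f : U -> V) :
  {morph f : x y / x - y} ->
  forall n (F : 'I_n -> U), f (\sum_(j < n) F j) = \sum_(j < n) f (F j).
Proof.
move=> fB n F.
have f0 : f 0 = 0 by rewrite -(subrr 0) fB subrr.
have fN x : f (- x) = - f x by rewrite -sub0r fB f0 sub0r.
by apply: (big_morph f _ f0) => x y; rewrite -{1}(opprK y) fB fN opprK.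
Qed.

Lemma in_add_trans (A : pzRingType) (U V W : zmodType)
  (aU : A -> U -> U) (aV : A -> V -> V) (aW : A -> W -> W) :
  in_add aU aV -> in_add aV aW -> in_add aU aW.
Proof.
move=> [n [i1 [p1 [[i1B i1Z] [p1B p1Z] i1K]]]].
move=> [k [i2 [p2 [[i2B i2Z] [p2B p2Z] i2K]]]].
pose flat (u : {ffun 'I_n -> {ffun 'I_k -> W}}) : {ffun 'I_#|{: 'I_n * 'I_k}| -> W} :=
  [ffun x => u (enum_val x).1 (enum_val x).2].
pose unflat (v : {ffun 'I_#|{: 'I_n * 'I_k}| -> W}) : {ffun 'I_n -> {ffun 'I_k -> W}} :=
  [ffun a => [ffun b => v (enum_rank (a, b))]].
exists #|{: 'I_n * 'I_k}|.
exists (fun u => flat [ffun a => i2 (i1 u a)]).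
exists (fun v => p1 [ffun a => p2 (unflat v a)]).
split; first split.
- by move=> x y; apply/ffunP => z; rewrite !ffunE i1B !ffunE i2B !ffunE.
- by move=> a x; apply/ffunP => z; rewrite !ffunE i1Z ffunE i2Z ffunE.
- split=> [x y|a x]; [rewrite -p1B | rewrite -p1Z]; congr p1; apply/ffunP => c.
  + by rewrite !ffunE -p2B; congr p2; apply/ffunP => b; rewrite !ffunE.
  + by rewrite !ffunE -p2Z; congr p2; apply/ffunP => b; rewrite !ffunE.
- move=> u; rewrite -[RHS]i1K; congr p1; apply/ffunP => a; rewrite !ffunE -[RHS]i2K.
  by congr p2; apply/ffunP => b; rewrite !ffunE enum_rankK.
Qed.

Lemma in_add_restrict (A B : pzRingType) (h : B -> A) (U V : zmodType)
  (aU : A -> U -> U) (aV : A -> V -> V) :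
  in_add aU aV -> in_add (fun b => aU (h b)) (fun b => aV (h b)).
Proof.
move=> [n [i [p [[iB iZ] [pB pZ] iK]]]].
by exists n, i, p; split=> //; split=> // b; apply: pZ.
Qed.

Lemma sum_delta_ffun (I : finType) (R : pzSemiRingType) (v : {ffun I -> R}) :
  \sum_j [ffun x => (x == j)%:R * v j] = v.
Proof.
apply/ffunP => x; rewrite sum_ffunE (bigD1 x) //= ffunE eqxx mul1r.
by rewrite big1 ?addr0 // => j /negbTE; rewrite ffunE eq_sym => ->; rewrite mul0r.
Qed.

Section BilinearPow.

Variables (R S : pzRingType) (l : {rmorphism R -> S}) (n : nat).

Lemma bilinear_powMl (f : S -> {ffun 'I_n -> R}) r s :
  bilinear_pow l f -> f (l r * s) = [ffun j => r * f s j].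
Proof.
case=> _ /(_ r 1 s); rewrite rmorph1 mulr1 => ->.
by apply/ffunP => j; rewrite !ffunE mulr1.
Qed.

Lemma bilinear_powMr (f : S -> {ffun 'I_n -> R}) s r :
  bilinear_pow l f -> f (s * l r) = [ffun j => f s j * r].
Proof.
case=> _ /(_ 1 r s); rewrite rmorph1 mul1r => ->.
by apply/ffunP => j; rewrite !ffunE mul1r.
Qed.

Lemma bilinear_pow_invMl (g : {ffun 'I_n -> R} -> S) r (v : {ffun 'I_n -> R}) :
  bilinear_pow_inv l g -> g [ffun j => r * v j] = l r * g v.
Proof.
case=> _ /(_ r 1 v); rewrite rmorph1 mulr1 => <-.
by congr g; apply/ffunP => j; rewrite !ffunE mulr1.
Qed.

Lemma bilinear_pow_invMr (g : {ffun 'I_n -> R} -> S) (v : {ffun 'I_n -> R}) r :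
  bilinear_pow_inv l g -> g [ffun j => v j * r] = g v * l r.
Proof.
case=> _ /(_ 1 r v); rewrite rmorph1 mul1r => <-.
by congr g; apply/ffunP => j; rewrite !ffunE mul1r.
Qed.

End BilinearPow.

Section TensorCentrallyProjective.

Variables (R S : pzRingType) (l : {rmorphism R -> S}).
Variables (omega : lmodType R) (T : lmodType S) (tau : S -> omega -> T).
Hypothesis tau_tensor : is_tensor l tau.

Lemma tensor_lift (A : zmodType) (b : S -> omega -> A) : balanced l b ->
  exists g : T -> A, {morph g : x y / x - y} /\ forall s w, g (tau s w) = b s w.
Proof.
case: tau_tensor => _ _ tau_univ /tau_univ [g [gB g_tau _]].
by exists g.
Qed.

Lemma tensor_hom_ext (A : zmodType) (g g' : T -> A) :
  {morph g : x y / x - y} -> {morph g' : x y / x - y} ->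
  (forall s w, g (tau s w) = g' (tau s w)) -> g =1 g'.
Proof.
case: tau_tensor => -[tauBl tauBr tauZ] _ tau_univ gB g'B g_g' t.
have gtau_bal : balanced l (fun s w => g (tau s w)).
  by split=> *; rewrite ?tauBl ?tauBr ?tauZ ?gB.
have [h [_ _ h_uniq]] := tau_univ _ _ gtau_bal.
by rewrite (h_uniq g) // (h_uniq g') // => s w; rewrite g_g'.
Qed.

Section Coordinates.

Variables (k : nat) (i : S -> {ffun 'I_k -> R}) (p : {ffun 'I_k -> R} -> S).
Hypotheses (i_bilinear : bilinear_pow l i) (p_bilinear : bilinear_pow_inv l p).
Hypothesis iK : cancel i p.

Definition tensor_coord (s : S) (w : omega) : {ffun 'I_k -> omega} :=
  [ffun j => i s j *: w].

Lemma tensor_coord_balanced : balanced l tensor_coord.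
Proof.
case: i_bilinear => iB _.
split=> [s s' w|s w w'|s r w]; apply/ffunP => j; rewrite !ffunE.
- by rewrite iB !ffunE scalerBl.
- by rewrite scalerBr.
- by rewrite bilinear_powMr // ffunE scalerA.
Qed.

Definition pow_to_tensor (v : {ffun 'I_k -> omega}) : T :=
  \sum_j tau (p [ffun x => (x == j)%:R]) (v j).

Lemma pow_to_tensorB : {morph pow_to_tensor : v v' / v - v'}.
Proof.
case: tau_tensor => -[_ tauBr _] _ _ v v'.
by rewrite /pow_to_tensor -sumrB; apply: eq_bigr => j _; rewrite !ffunE tauBr.
Qed.

(* [l r] commutes with [p e_j], where [e_j] is the j-th unit vector: the entries of [e_j] are 0 and 1. *)
Lemma pow_to_tensorZ r v :
  pow_to_tensor (act_pow (fun r (w : omega) => r *: w) r v) = l r *: pow_to_tensor v.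
Proof.
case: tau_tensor => -[_ _ tauZ] tauM _.
rewrite /pow_to_tensor scaler_sumr; apply: eq_bigr => j _.
rewrite ffunE -tauZ -tauM -bilinear_pow_invMr // -bilinear_pow_invMl //.
by congr (tau (p _)); apply/ffunP => x; rewrite !ffunE mulr_natl mulr_natr.
Qed.

Section InducedMap.

Variable (I : T -> {ffun 'I_k -> omega}).
Hypotheses (IB : {morph I : t t' / t - t'}) (I_tau : forall s w, I (tau s w) = tensor_coord s w).

Lemma tensor_to_powZ r t :
  I (l r *: t) = act_pow (fun r (w : omega) => r *: w) r (I t).
Proof.
case: tau_tensor => _ tauM _.
apply: (@tensor_hom_ext _ (fun t => I (l r *: t))
  (fun t => act_pow (fun r (w : omega) => r *: w) r (I t))) => [x y|x y|s w].
- by rewrite scalerBr IB.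
- by rewrite IB; apply/ffunP => j; rewrite !ffunE scalerBr.
- rewrite -tauM !I_tau; apply/ffunP => j.
  by rewrite !ffunE bilinear_powMl // ffunE scalerA.
Qed.

Lemma tensor_to_powK : cancel I pow_to_tensor.
Proof.
case: tau_tensor => -[tauBl _ tauZ] _ _.
have tau_sum w : {morph tau^~ w : s s' / s - s'} by move=> s s'; rewrite tauBl.
apply: (@tensor_hom_ext _ _ id) => [x y|//|s w]; first by rewrite IB pow_to_tensorB.
rewrite I_tau /pow_to_tensor /tensor_coord.
under eq_bigr => j _ do rewrite ffunE -tauZ -bilinear_pow_invMr //.
rewrite -(morph_sum_of_subB (tau_sum w)) -(morph_sum_of_subB p_bilinear.1).
rewrite -{2}[s]iK; congr (tau (p _) w).
rewrite -[RHS]sum_delta_ffun; apply: eq_bigr => j _.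
by apply/ffunP => x; rewrite !ffunE.
Qed.

End InducedMap.

Lemma bimodule_split_tensor_in_add :
  in_add (fun r (t : T) => l r *: t) (fun r (w : omega) => r *: w).
Proof.
have [I [IB I_tau]] := tensor_lift tensor_coord_balanced.
exists k, I, pow_to_tensor; split.
- by split=> [|r t]; [exact: IB | exact: tensor_to_powZ].
- by split=> [|r v]; [exact: pow_to_tensorB | exact: pow_to_tensorZ].
- exact: tensor_to_powK.
Qed.

End Coordinates.

Lemma centrally_projective_tensor_in_add : centrally_projective l ->
  in_add (fun r (t : T) => l r *: t) (fun r (w : omega) => r *: w).
Proof.
by case=> k [i [p [i_bil p_bil iK]]]; exact: bimodule_split_tensor_in_add i_bil p_bil iK.
Qed.

End TensorCentrallyProjective.

Theorem lemma4p2 (R S : pzRingType) (l : {rmorphism R -> S})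
  (omega : lmodType R) (M : lmodType S)
  (T : lmodType S) (tau : S -> omega -> T) :
  noetherian R -> noetherian S ->
  frobenius l -> centrally_projective l ->
  fin_gen omega ->
  is_tensor l tau ->
  in_add (fun s (m : M) => s *: m) (fun s (t : T) => s *: t) ->
  in_add (fun r (m : M) => l r *: m) (fun r (w : omega) => r *: w).
Proof.
move=> _ _ _ l_cproj _ tau_tensor M_in_add.
apply: in_add_trans (in_add_restrict l M_in_add) _.
exact: centrally_projective_tensor_in_add tau_tensor l_cproj.
Qed.
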